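(* In the setting described in the context, for each $i=2,\dots,h-1$, writing $\min D_i=a_i x^{\nu_{i,0}}\bar f_1^{\nu_{i,1}}\cdots\bar f_{i-1}^{\nu_{i,i-1}}$ with $a_i\in k^*$, $\nu_{i,0}\ge 0$ and $0\le \nu_{i,j}<p^{n_j}$ for $j\ge1$, the lower jumps satisfy $$b_i=\nu_{i,0}\,p^{n_1+\cdots+n_{i-1}}+\sum_{j=1}^{i-1}\nu_{i,j}\,p^{n_{j+1}+\cdots+n_{i-1}}\,b_j .$$
   Context: Let $k$ be an algebraically closed field of characteristic $p\ge 5$. Let $\pi:X\to\mathbb{P}^1$ be a Galois cover of curves over $k$ with function field $F\supset k(x)$ and Galois group $G$, such that the only ramified point of $\mathbb{P}^1$ is $P_\infty$ (the pole of $x$), which is totally and wildly ramified, and $G$ is a $p$-group equal to its first ramification group. Let $P$ be the unique point of $X$ over $P_\infty$ and $v$ the valuation of $F$ at $P$; thus $v(x)=-|G|$. Let $b_1<\dots<b_{h-1}$ be the jumps of the lower ramification filtration $G_i=\{\sigma: v(\sigma(t)-t)\ge i+1\}$ ($t$ a uniformizer at $P$), with $G_{b_h}=1$ and $[G_{b_i}:G_{b_{i+1}}]=p^{n_i}$, so $|G|=p^{n_1+\cdots+n_{h-1}}$. Let $F_i=F^{G_{b_i}}$, $F_1=k(x)$. There are $\bar f_i\in F_{i+1}$ with $F_{i+1}=F_i(\bar f_i)$, only pole at $P$, $v(\bar f_i)=-\bar m_i$ with $\bar m_i=p^{n_{i+1}+\cdots+n_{h-1}}b_i$, and minimal polynomial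 over $F_i$ equal to $X^{p^{n_i}}+a^{(i)}_{n_i-1}X^{p^{n_i-1}}+\cdots+a^{(i)}_0X-D_i$ with $a^{(i)}_j\in k$, $D_i\in F_i$. Each $D_i$ is a finite sum $\sum\gamma x^{\ell_0}\bar f_1^{\ell_1}\cdots\bar f_{i-1}^{\ell_{i-1}}$ ($\gamma\in k$, $\ell_0\ge0$, $0\le\ell_j<p^{n_j}$) in which distinct monomials have distinct valuations; $\min D_i$ is the summand of smallest valuation, so $v(\min D_i)=v(D_i)$. *)

From HB Require Import structures.
From mathcomp Require Import all_boot all_order all_algebra all_fingroup.
From mathcomp Require Import pgroup.
Set Implicit Arguments. Unset Strict Implicit. Unset Printing Implicit Defensive.
Import Order.TTheory GRing.Theory Num.Theory.
Local Open Scope ring_scope.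

(* A place of F/k: a normalized discrete valuation of F (values on nonzero
   elements only; the value at 0 is irrelevant) which is trivial on k,
   where k is embedded in F by iota. *)
Definition is_place (k F : fieldType) (iota : {rmorphism k -> F}) (w : F -> int)
  : Prop :=
  [/\ (forall a b : F, a != 0 -> b != 0 -> w (a * b) = w a + w b),
      (forall a b : F, a != 0 -> b != 0 -> a + b != 0 ->
                       Num.min (w a) (w b) <= w (a + b)),
      (exists y : F, y != 0 /\ w y = 1) &
      (forall c : k, c != 0 -> w (iota c) = 0)].

Definition in_kx (k F : fieldType) (iota : {rmorphism k -> F}) (x y : F) : Prop :=
  exists q r : {poly k},
    (map_poly iota r).[x] != 0 /\ y = (map_poly iota q).[x] / (map_poly iota r).[x].

Definition ramgrp (gT : finGroupType) (G : {set gT}) (F : fieldType)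
  (act : gT -> F -> F) (v : F -> int) (t : F) (i : nat) : {set gT} :=
  [set g in G | (act g t == t) || ((i.+1)%:Z <= v (act g t - t))].

Definition Gb (gT : finGroupType) (G : {set gT}) (F : fieldType)
  (act : gT -> F -> F) (v : F -> int) (t : F) (h : nat) (b : nat -> nat)
  (i : nat) : {set gT} :=
  if (i < h)%N then ramgrp G act v t (b i) else [set 1%g].

Definition fixedby (gT : finGroupType) (F : fieldType) (act : gT -> F -> F)
  (H : {set gT}) (y : F) : Prop :=
  forall g, g \in H -> act g y = y.

(* the monomial  gamma * x^{l_0} * fb_1^{l_1} ... fb_{i-1}^{l_{i-1}},
   encoded by tm = (gamma, [:: l_0; ...; l_{i-1}]) *)
Definition monom (k F : fieldType) (iota : {rmorphism k -> F}) (x : F)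
  (fb : nat -> F) (i : nat) (tm : k * seq nat) : F :=
  iota tm.1 * x ^+ (nth 0%N tm.2 0) * \prod_(1 <= j < i) fb j ^+ (nth 0%N tm.2 j).

Definition addpol (k F : fieldType) (iota : {rmorphism k -> F}) (p : nat)
  (n : nat -> nat) (a : nat -> nat -> k) (D : nat -> F) (i : nat) : {poly F} :=
  'X^(p ^ n i) + \sum_(j < n i) (iota (a i j))%:P * 'X^(p ^ j) - (D i)%:P.

From HB Require Import structures.
From mathcomp Require Import all_boot all_order all_algebra all_fingroup.
From mathcomp Require Import pgroup.
From mathcomp Require Import zify ring.
Set Implicit Arguments.
Unset Strict Implicit.
Unset Printing Implicit Defensive.
Import Order.TTheory GRing.Theory Num.Theory.
Local Open Scope ring_scope.

(* Evaluate the minimal polynomial of fb_i at fb_i: its leading term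
   fb_i^(p^n_i) strictly dominates the other additive terms, so
   v(D_i) = p^(n_i) v(fb_i).  The summands of D_i have distinct valuations,
   so v(D_i) = v(min D_i), which is linear in the exponents nu_(i,j) with
   coefficients v(x) = -|G| and v(fb_j).  Since |G| = p^(n_1+...+n_(h-1)) by
   the index formula, dividing by p^(n_i+...+n_(h-1)) gives the formula. *)

Lemma uniq_map_inj_in (T U : eqType) (f : T -> U) (s : seq T) :
  uniq (map f s) -> {in s &, injective f}.
Proof.
elim: s => //= z s IH /andP[fz_s us] x y; rewrite !inE.
case/orP=> [/eqP->|xs] /orP[/eqP->|ys] fxy //.
- by case/negP: fz_s; rewrite fxy map_f.
- by case/negP: fz_s; rewrite -fxy map_f.
- exact: IH.
Qed.

Section Valuation.

Variables (F : fieldType) (v : F -> int).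
Hypothesis vM : forall a b : F, a != 0 -> b != 0 -> v (a * b) = v a + v b.
Hypothesis vD : forall a b : F, a != 0 -> b != 0 -> a + b != 0 ->
  Num.min (v a) (v b) <= v (a + b).

Lemma valuation1 : v 1 = 0.
Proof.
have := vM (oner_neq0 F) (oner_neq0 F); rewrite mulr1.
by move/(congr1 (fun z => z - v 1)); rewrite subrr addrK.
Qed.

Lemma valuationN y : y != 0 -> v (- y) = v y.
Proof.
move=> y0; have N1 : (-1 : F) != 0 by rewrite oppr_eq0 oner_neq0.
have vN1 : v (-1) = 0.
  by have := vM N1 N1; rewrite mulrNN mulr1 valuation1; move: (v (-1)) => z; lia.
by rewrite -mulN1r vM // vN1 add0r.
Qed.

Lemma valuationX y m : y != 0 -> v (y ^+ m) = v y * m%:Z.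
Proof.
move=> y0; elim: m => [|m IH]; first by rewrite expr0 valuation1 mulr0.
by rewrite exprS vM ?expf_neq0 // IH; lia.
Qed.

Lemma valuation_prod (I : eqType) (r : seq I) (f : I -> F) :
  (forall j, j \in r -> f j != 0) -> v (\prod_(j <- r) f j) = \sum_(j <- r) v (f j).
Proof.
elim: r => [|j r IH] fr0; first by rewrite !big_nil valuation1.
have fr0' j' : j' \in r -> f j' != 0 by move=> jr; apply: fr0; rewrite inE jr orbT.
rewrite !big_cons vM ?IH ?fr0 ?mem_head //.
by rewrite prodf_seq_neq0; apply/allP=> j' /fr0'.
Qed.

Lemma valuationD_lt a b :
  a != 0 -> b != 0 -> v a < v b -> a + b != 0 /\ v (a + b) = v a.
Proof.
move=> a0 b0 lt_ab.
have ab0 : a + b != 0.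
  apply: contraTneq lt_ab => /eqP; rewrite addr_eq0 => /eqP->.
  by rewrite valuationN // ltxx.
split=> //; apply/eqP; rewrite eq_le.
have := vD a0 b0 ab0; rewrite (min_l (ltW lt_ab)) => ->; rewrite andbT.
have Nb0 : - b != 0 by rewrite oppr_eq0.
have := vD ab0 Nb0; rewrite addrK valuationN // ge_min => /(_ a0).
by case/orP=> // le_ba; move: lt_ab; rewrite ltNge le_ba.
Qed.

Lemma valuation_big_dominant (I : eqType) (r : seq I) (f : I -> F) a :
  a != 0 -> (forall j, j \in r -> f j != 0 -> v a < v (f j)) ->
  a + \sum_(j <- r) f j != 0 /\ v (a + \sum_(j <- r) f j) = v a.
Proof.
move=> a0; elim: r => [|j r IH] dom; first by rewrite big_nil addr0.
have [s0 vs] : a + \sum_(j <- r) f j != 0 /\ v (a + \sum_(j <- r) f j) = v a.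
  by apply: IH => j' jr; apply: dom; rewrite inE jr orbT.
rewrite big_cons addrCA addrC.
have [->|fj0] := eqVneq (f j) 0; first by rewrite addr0.
have lt_sj : v (a + \sum_(j <- r) f j) < v (f j) by rewrite vs dom ?mem_head.
by have [-> ->] := valuationD_lt s0 fj0 lt_sj.
Qed.

Lemma valuation_sum_min (T : eqType) (s : seq T) (f : T -> F) t0 :
  uniq s -> t0 \in s -> f t0 != 0 ->
  (forall t, t \in s -> t != t0 -> f t != 0 -> v (f t0) < v (f t)) ->
  v (\sum_(t <- s) f t) = v (f t0).
Proof.
move=> us t0s ft0 dom; rewrite (bigD1_seq t0) //= -big_filter.
have dom' t : t \in [seq t <- s | t != t0] -> f t != 0 -> v (f t0) < v (f t).
  by rewrite mem_filter => /andP[t_t0 ts]; exact: dom.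
by have [_ ->] := valuation_big_dominant ft0 dom'.
Qed.

Lemma valuation_sum_distinct (T U : eqType) (key : T -> U) (s : seq T) (f : T -> F) t0 :
  uniq (map key s) -> t0 \in s -> f t0 != 0 ->
  (forall t, t \in s -> v (f t0) <= v (f t)) ->
  (forall t1 t2, t1 \in s -> t2 \in s -> key t1 != key t2 -> v (f t1) != v (f t2)) ->
  v (\sum_(t <- s) f t) = v (f t0).
Proof.
move=> us t0s ft0 le_t0 dist; apply: (valuation_sum_min (map_uniq us) t0s ft0).
move=> t ts t_t0 _; have key_t : key t != key t0.
  by apply: contraNneq t_t0 => key_t; apply/eqP; apply: (uniq_map_inj_in us ts t0s key_t).
by rewrite lt_neqAle le_t0 // andbT eq_sym dist.
Qed.

End Valuation.

Lemma valuation_additive_root (k F : fieldType) (iota : {rmorphism k -> F})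
    (v : F -> int) (p m : nat) (a : nat -> k) (y d : F) :
  is_place iota v -> (1 < p)%N -> y != 0 -> v y < 0 ->
  root ('X^(p ^ m) + \sum_(j < m) (iota (a j))%:P * 'X^(p ^ j) - d%:P) y ->
  v d = v y * (p ^ m)%N%:Z.
Proof.
move=> [vM vD _ vk] p1 y0 vy_neg.
rewrite /root !hornerE horner_sum subr_eq0 => /eqP <-.
under eq_bigr do rewrite !hornerE.
have yp0 : y ^+ (p ^ m) != 0 by rewrite expf_neq0.
have dom (j : 'I_m) : j \in index_enum 'I_m -> iota (a j) * y ^+ (p ^ j) != 0 ->
    v (y ^+ (p ^ m)) < v (iota (a j) * y ^+ (p ^ j)).
  move=> _ ayj0; have aj0 : a j != 0.
    by apply: contraNneq ayj0 => ->; rewrite rmorph0 mul0r.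
  rewrite vM ?expf_neq0 ?fmorph_eq0 // vk // add0r !valuationX //.
  by rewrite ltr_nM2l // ltz_nat ltn_exp2l ?ltn_ord.
by have [_ ->] := valuation_big_dominant vM vD yp0 dom; rewrite valuationX.
Qed.

Section Monomials.

Variables (k F : fieldType) (iota : {rmorphism k -> F}) (x : F) (fb : nat -> F).
Variables (i : nat) (tm : k * seq nat).
Hypotheses (x0 : x != 0) (c0 : tm.1 != 0) (fb0 : forall j, (1 <= j < i)%N -> fb j != 0).

Lemma prod_fb_neq0 : \prod_(1 <= j < i) fb j ^+ nth 0 tm.2 j != 0.
Proof.
rewrite prodf_seq_neq0; apply/allP=> j; rewrite mem_index_iota => /fb0 fbj0.
exact: expf_neq0.
Qed.

Lemma monom_neq0 : monom iota x fb i tm != 0.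
Proof. by rewrite /monom !mulf_neq0 ?fmorph_eq0 ?expf_neq0 ?prod_fb_neq0. Qed.

Lemma valuation_monom (v : F -> int) (N0 : nat) (w : nat -> nat) :
  is_place iota v -> v x = - N0%:Z -> (forall j, (1 <= j < i)%N -> v (fb j) = - (w j)%:Z) ->
  v (monom iota x fb i tm) =
    - (N0 * nth 0 tm.2 0 + \sum_(1 <= j < i) w j * nth 0 tm.2 j)%N%:Z.
Proof.
case=> vM _ _ vk vx vfb.
have fbX0 j : j \in index_iota 1 i -> fb j ^+ nth 0 tm.2 j != 0.
  by rewrite mem_index_iota => /fb0 fbj0; apply: expf_neq0.
rewrite /monom !vM ?mulf_neq0 ?expf_neq0 ?fmorph_eq0 ?prod_fb_neq0 // vk // add0r.
rewrite valuationX // vx (valuation_prod vM fbX0) PoszD PoszM opprD mulNr.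
congr (_ + _); rewrite -natz natr_sum -sumrN; apply: eq_big_nat => j ji.
by rewrite valuationX ?fb0 // vfb // mulNr natz PoszM.
Qed.

End Monomials.

Section LowerFiltration.

Variables (gT : finGroupType) (G : {set gT}) (F : fieldType).
Variables (act : gT -> F -> F) (v : F -> int) (t : F) (h : nat) (b : nat -> nat).

Local Notation G_ := (ramgrp G act v t).

Lemma ramgrp_sub j : G_ j \subset G.
Proof. by apply/subsetP=> g; rewrite inE => /andP[]. Qed.

Lemma ramgrpS j : G_ j.+1 \subset G_ j.
Proof.
apply/subsetP=> g; rewrite !inE => /andP[-> /orP[-> //| le_jv]].
by rewrite (le_trans _ le_jv) ?orbT // lez_nat.
Qed.

Hypothesis b_increasing :
  forall i j, (1 <= i)%N -> (i < j)%N -> (j <= h - 1)%N -> (b i < b j)%N.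
Hypothesis jumpsP : forall j, G_ j != G_ j.+1 <-> exists2 i, (1 <= i <= h - 1)%N & j = b i.

Lemma ramgrp_first_jump : G_ 1 = G -> G_ (b 1) = G.
Proof.
move=> G1; have [b10|b1_gt0] := posnP (b 1).
  by apply/eqP; rewrite b10 eqEsubset ramgrp_sub -{1}G1 ramgrpS.
suff G_const j : (1 <= j <= b 1)%N -> G_ j = G by rewrite G_const ?b1_gt0 /=.
elim: j => [//|j IH] /andP[_ le_j1]; have [->//|j_gt0] := posnP j.
have no_jump : G_ j = G_ j.+1.
  apply/eqP; apply: contraT => /jumpsP[i /andP[i1 ih] ji].
  have [lt_i1|gt_i1|eq_i1] := ltngtP i 1; first by rewrite ltnNge i1 in lt_i1.
    by have := b_increasing (leqnn 1) gt_i1 ih; lia.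
  by move: le_j1; rewrite ji eq_i1 ltnn.
by rewrite -no_jump IH // j_gt0 ltnW.
Qed.

Variables (p : nat) (n : nat -> nat).
Hypothesis card_GbS : forall i, (1 <= i <= h - 1)%N ->
  #|Gb G act v t h b i| = (p ^ n i * #|Gb G act v t h b i.+1|)%N.

Lemma card_Gb i : (1 <= i <= h)%N -> #|Gb G act v t h b i| = (p ^ (\sum_(i <= j < h) n j))%N.
Proof.
case/andP=> i1 ih; rewrite -(subKn ih); have : (h - i < h)%N by lia.
elim: (h - i)%N => [|d IH] lt_dh.
  by rewrite subn0 /Gb ltnn cards1 big_geq.
have hd : ((h - d.+1).+1 = h - d)%N by lia.
rewrite card_GbS; last by apply/andP; split; lia.
by rewrite hd IH ?(ltnW lt_dh) // (big_ltn (m := (h - d.+1)%N)) ?hd ?expnD //; lia.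
Qed.

Lemma card_ramified_group : (1 < h)%N -> G_ 1 = G -> #|G| = (p ^ (\sum_(1 <= j < h) n j))%N.
Proof.
move=> h1 G1; rewrite -card_Gb ?(ltnW h1) //.
by rewrite /Gb (_ : 1 < h)%N // ramgrp_first_jump.
Qed.

End LowerFiltration.

Lemma jump_of_scaled_eq (p : nat) (n b nu : nat -> nat) (h i : nat) :
  (0 < p)%N -> (1 <= i < h)%N ->
  (p ^ (\sum_(i.+1 <= j < h) n j) * b i * p ^ n i =
     p ^ (\sum_(1 <= j < h) n j) * nu 0
     + \sum_(1 <= j < i) p ^ (\sum_(j.+1 <= l < h) n l) * b j * nu j)%N ->
  b i = (nu 0 * p ^ (\sum_(1 <= j < i) n j)
         + \sum_(1 <= j < i) nu j * p ^ (\sum_(j.+1 <= l < i) n l) * b j)%N.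
Proof.
move=> p0 /andP[i1 ih]; set T := (\sum_(i <= j < h) n j)%N.
have split_at m : (m <= i)%N -> (\sum_(m <= j < h) n j = \sum_(m <= j < i) n j + T)%N.
  by move=> mi; rewrite (@big_cat_nat _ _ _ i) ?(ltnW ih).
have -> : (p ^ (\sum_(i.+1 <= j < h) n j) * b i * p ^ n i = p ^ T * b i)%N.
  by rewrite /T (big_ltn ih) expnD; ring.
have pT : (0 < p ^ T)%N by rewrite expn_gt0 p0.
move=> scaled; apply/eqP; rewrite -(eqn_pmul2l pT) scaled; apply/eqP.
rewrite split_at // expnD mulnDr big_distrr /=; congr (_ + _)%N; first ring.
by apply: eq_big_nat => j /andP[_ ji]; rewrite split_at // expnD; ring.
Qed.

Theorem mainTheorem2
  (p : nat) (k : closedFieldType) (F : fieldType) (iota : {rmorphism k -> F})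
  (x : F) (gT : finGroupType) (G : {group gT}) (act : gT -> F -> F)
  (v : F -> int) (t : F) (h : nat) (b n : nat -> nat) (fb : nat -> F)
  (a : nat -> nat -> k) (D : nat -> F) (terms : nat -> seq (k * seq nat)) :
  (* k algebraically closed of characteristic p >= 5 *)
  (5 <= p)%N -> p \in [pchar k] ->
  (* x transcendental over k *)
  (forall q : {poly k}, q != 0 -> (map_poly iota q).[x] != 0) ->
  (* G acts faithfully on F by field automorphisms, with fixed field k(x) *)
  (forall g, g \in G -> forall y z, act g (y + z) = act g y + act g z) ->
  (forall g, g \in G -> forall y z, act g (y * z) = act g y * act g z) ->
  (forall g, g \in G -> act g 1 = 1) ->
  (forall y, act 1%g y = y) ->
  (forall g g', g \in G -> g' \in G -> forall y, act (g * g')%g y = act g (act g' y)) ->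
  (forall g, g \in G -> (forall y, act g y = y) -> g = 1%g) ->
  (forall y, fixedby act G y <-> in_kx iota x y) ->
  (* G is a p-group *)
  (p.-group G)%g ->
  (* P is a place of F with v(x) = -|G|, the unique place above P_infty *)
  is_place iota v -> v x = - (#|G|%:Z) ->
  (forall w, is_place iota w -> w x < 0 -> forall y, y != 0 -> w y = v y) ->
  (* every place above a finite place of k(x) is unramified *)
  (forall w, is_place iota w -> 0 <= w x ->
     exists y, [/\ in_kx iota x y, y != 0 & w y = 1]) ->
  (* t is a uniformizer at P *)
  t != 0 -> v t = 1 ->
  (* G equals its first ramification group *)
  ramgrp G act v t 1 = G ->
  (* b_1 < ... < b_{h-1} are exactly the jumps of the lower filtration *)
  (forall i j, (1 <= i)%N -> (i < j)%N -> (j <= h - 1)%N -> (b i < b j)%N) ->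
  (forall j, ramgrp G act v t j != ramgrp G act v t j.+1 <->
     exists2 i, (1 <= i <= h - 1)%N & j = b i) ->
  (* [G_{b_i} : G_{b_{i+1}}] = p^{n_i}, with G_{b_h} = 1 *)
  (forall i, (1 <= i <= h - 1)%N ->
     #|Gb G act v t h b i| = (p ^ n i * #|Gb G act v t h b i.+1|)%N) ->
  (* the generators fb_i *)
  (forall i, (1 <= i <= h - 1)%N ->
     [/\ fb i != 0,
         fixedby act (Gb G act v t h b i.+1) (fb i),
         (forall y, fixedby act (Gb G act v t h b i.+1) y <->
            exists cs : seq F, (forall c, c \in cs -> fixedby act (Gb G act v t h b i) c)
              /\ y = \sum_(j < size cs) cs`_j * fb i ^+ j),
         (forall w, is_place iota w -> (exists y, y != 0 /\ w y != v y) -> 0 <= w (fb i)) &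
         v (fb i) = - ((p ^ (\sum_(i.+1 <= j < h) n j) * b i)%N)%:Z]) ->
  (* minimal polynomial of fb_i over F_i *)
  (forall i, (1 <= i <= h - 1)%N ->
     [/\ fixedby act (Gb G act v t h b i) (D i),
         root (addpol iota p n a D i) (fb i) &
         (forall q : {poly F}, q != 0 ->
            (forall j, fixedby act (Gb G act v t h b i) q`_j) ->
            root q (fb i) -> (size (addpol iota p n a D i) <= size q)%N)]) ->
  (* D_i is a sum of monomials in x, fb_1, ..., fb_{i-1} with distinct valuations *)
  (forall i, (1 <= i <= h - 1)%N ->
     [/\ D i = \sum_(tm <- terms i) monom iota x fb i tm,
         (forall tm, tm \in terms i ->
            [/\ tm.1 != 0, size tm.2 = i &
                forall j, (1 <= j < i)%N -> (nth 0%N tm.2 j < p ^ n j)%N]),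
         uniq [seq tm.2 | tm <- terms i] &
         (forall tm1 tm2, tm1 \in terms i -> tm2 \in terms i -> tm1.2 != tm2.2 ->
            v (monom iota x fb i tm1) != v (monom iota x fb i tm2))]) ->
  (* conclusion: for min D_i = a_i x^{nu_0} fb_1^{nu_1} ... fb_{i-1}^{nu_{i-1}} *)
  forall i, (2 <= i <= h - 1)%N ->
  forall (ai : k) (nu : seq nat), (ai, nu) \in terms i ->
  (forall tm, tm \in terms i -> v (monom iota x fb i (ai, nu)) <= v (monom iota x fb i tm)) ->
  b i = (nth 0 nu 0 * p ^ (\sum_(1 <= j < i) n j)
         + \sum_(1 <= j < i) nth 0 nu j * p ^ (\sum_(j.+1 <= l < i) n l) * b j)%N.
Proof.
move=> p5 _ transc _ _ _ _ _ _ _ _ vP vx _ _ _ _ G1 b_incr jumpsP card_GbS fbP minP DP.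
move=> i /andP[i2 ih] ai nu min_in min_le.
have i_range : (1 <= i <= h - 1)%N by rewrite ih (ltnW i2).
have [D_sum D_terms D_uniq D_distinct] := DP i i_range.
have [_ fb_root _] := minP i i_range.
have fb_ok j : (1 <= j < i)%N -> (1 <= j <= h - 1)%N.
  by case/andP=> j1 ji; rewrite j1 (leq_trans (ltnW ji)).
have x0 : x != 0 by have := transc 'X (negbT (polyX_eq0 _)); rewrite map_polyX hornerX.
have [ai0 _ _] := D_terms _ min_in.
have cardG : #|G| = (p ^ (\sum_(1 <= j < h) n j))%N.
  by apply: (card_ramified_group b_incr jumpsP card_GbS) => //; lia.
have fb0 j : (1 <= j < i)%N -> fb j != 0.
  by move=> /fb_ok jh; have [] := fbP j jh.
have vfb j : (1 <= j < i)%N -> v (fb j) = - (p ^ (\sum_(j.+1 <= l < h) n l) * b j)%N%:Z.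
  by move=> /fb_ok jh; have [] := fbP j jh.
have [fbi0 _ _ _ vfbi] := fbP i i_range.
have p1 : (1 < p)%N by lia.
have vD : v (D i) = v (fb i) * (p ^ n i)%N%:Z.
  apply: (valuation_additive_root (a := a i) vP p1 fbi0 _ fb_root).
  rewrite vfbi oppr_lt0 ltz_nat muln_gt0 expn_gt0 (ltnW p1) /=.
  exact: leq_ltn_trans (leq0n (b 1)) (b_incr 1 i (leqnn 1) i2 ih).
have [vM v_ultra _ _] := vP.
move: vD; rewrite D_sum (valuation_sum_distinct vM v_ultra D_uniq min_in) ?monom_neq0 //.
rewrite (valuation_monom x0 ai0 fb0 vP vx vfb) cardG vfbi mulNr -PoszM.
move=> /oppr_inj/eqP; rewrite eqz_nat eq_sym => /eqP scaled.
apply: (jump_of_scaled_eq (nu := nth 0 nu) _ _ scaled); first lia.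
by rewrite (ltnW i2); lia.
Qed.
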